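(* Let $\mathcal{G}$ be a quantitative concurrent graph game with $F$-expanded game $\mathcal{G}^\star$. (1) If $P$ is a Nash equilibrium profile with set of winners $W$, then every transition of $\mathsf{outcome}(P)$ is safe for $W$. (2) Let $(u,W)$ be a state of $\mathcal{G}^\star$, considered as the initial state. If $P$ is a profile whose outcome (from $(u,W)$) remains in $V\times W$ and takes only transitions that are safe for $W$, then the second-strike profile $\overline{P}$ is a Nash equilibrium.
   Context: A quantitative concurrent graph game is a tuple $\mathcal{G}=\langle \Omega, V, \{\mathsf{Act}_\alpha\}_{\alpha\in\Omega}, v_0, \delta, \mathsf{cost}, F\rangle$: finite players $\Omega$, finite states $V$, finite action sets $\mathsf{Act}_\alpha$ (all enabled everywhere), initial state $v_0$, transition function $\delta: V\times\prod_\alpha\mathsf{Act}_\alpha\to V$, cost function giving each transition a vector $(\mathsf{cost}_\alpha)_\alpha\in\mathbb{N}^\Omega$, and target sets $F_\alpha\subseteq V$. $\mathsf{cost}_\alpha$ of an outcome (sequence of consecutive transitions) is the $\alpha$-cost accumulated until $F_\alpha$ is first visited, $\infty$ if never. Strategies map histories to actions; profiles induce outcomes; a profile is a Nash equilibrium (NE) if no player can strictly lower its own cost by unilaterally changing its strategy. $C_\alpha(u)=\max_\sigma\min_\tau\mathsf{cost}_\alpha(\mathsf{outcome}_u(\sigma,\tau))$ (max over strategies of the coalition $\Omega\setminus\{\alpha\}$, min over strategies of $\alpha$, outcome starting at $u$). The $F$-expanded game $\mathcal{G}^\star$ has states $V\times 2^\Omega$, initial state $(v_0,\emptyset)$, the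 same actions, transitions $\delta^\star((v,S),\vec a)=(\delta(v,\vec a),S\cup\{\alpha: v\in F_\alpha\})$, costs $\mathsf{cost}^\star_\alpha((v,S),\vec a)=\mathsf{cost}_\alpha(v,\vec a)$ if $\alpha\notin S$ and $0$ if $\alpha\in S$, and targets $F^\star_\alpha=\{(v,S):\alpha\in S\}$; strategies, outcomes and profiles of $\mathcal{G}$ and $\mathcal{G}^\star$ correspond bijectively. The set of winners of a profile is the set of players $\alpha$ whose target is visited along its outcome. A transition $(x,\vec a,y)$ (of $\mathcal{G}$ or $\mathcal{G}^\star$) is safe for $W\subseteq\Omega$ if for every $\alpha\in\Omega\setminus W$ and every action vector $\vec b$ obtained from $\vec a$ by possibly changing the action of Player $\alpha$, the resulting transition $(x,\vec b,z)$ satisfies $C_\alpha(z)=\infty$. Second-strike profile $\overline{P}$ of $P$ with outcome $\pi$: each player follows $P$ while others follow $\pi$; once a player $\alpha$ deviates and a state $v'$ off $\pi$ is reached, the others play from $v'$ a fixed memoryless coalition strategy guaranteeing $\mathsf{cost}_\alpha\ge C_\alpha(w)$ from every state $w$. *)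

From Stdlib Require Import ClassicalEpsilon.
From mathcomp Require Import all_boot.

Set Implicit Arguments.
Unset Strict Implicit.
Unset Printing Implicit Defensive.

(* ---------- extended naturals N ∪ {∞} : None = ∞ ---------- *)
Definition enat := option nat.

Definition ele (x y : enat) : Prop :=
  match x, y with
  | _, None => True
  | None, Some _ => False
  | Some m, Some n => m <= n
  end.

Definition elt (x y : enat) : Prop := ele x y /\ x <> y.

Definition is_glb (S : enat -> Prop) (x : enat) : Prop :=
  (forall y, S y -> ele x y) /\ (forall z, (forall y, S y -> ele z y) -> ele z x).
Definition is_lub (S : enat -> Prop) (x : enat) : Prop :=
  (forall y, S y -> ele y x) /\ (forall z, (forall y, S y -> ele y z) -> ele x z).

(* N ∪ {∞} is a complete lattice, so these are the genuine inf / sup *)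
Definition einf (S : enat -> Prop) : enat := epsilon (inhabits None) (is_glb S).
Definition esup (S : enat -> Prop) : enat := epsilon (inhabits None) (is_lub S).

Record game := Game {
  player : finType;
  state  : finType;
  act    : player -> finType;
  v0     : state;
  delta  : state -> (forall p : player, act p) -> state;
  cost   : state -> (forall p : player, act p) -> player -> nat;
  target : player -> {set state}
}.

Section Games.
Variable G : game.

Definition avec := forall p : player G, act p.

Record history := Hist { hstart : state G; htrans : seq (avec * state G) }.

Definition hlast (h : history) : state G := last (hstart h) (map snd (htrans h)).

Definition strategy (p : player G) := history -> act p.
Definition profile := forall p : player G, strategy p.

Fixpoint ohist (u : state G) (P : profile) (n : nat) : history :=
  match n with
  | 0 => Hist u [::]
  | n'.+1 => let h := ohist u P n' in
             let a : avec := fun p => P p h in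
             Hist u (rcons (htrans h) (a, delta (hlast h) a))
  end.

(* n-th state and n-th action vector of the outcome; the n-th transition is
   (ostate u P n, oact u P n, ostate u P n.+1) *)
Definition ostate (u : state G) (P : profile) (n : nat) : state G := hlast (ohist u P n).
Definition oact (u : state G) (P : profile) (n : nat) : avec := fun p => P p (ohist u P n).

Definition out_cost (s : nat -> state G) (a : nat -> avec) (al : player G) : enat :=
  match excluded_middle_informative (exists k, (fun k => s k \in target al) k) with
  | left H => Some (\sum_(i < ex_minn H) cost (s i) (a i) al)
  | right _ => None
  end.

Definition pcost (u : state G) (P : profile) (al : player G) : enat :=
  out_cost (ostate u P) (oact u P) al.

Definition variant (al : player G) (P Q : profile) : Prop :=
  forall p, p <> al -> forall h, Q p h = P p h.

Definition NE (u : state G) (P : profile) : Prop :=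
  forall al Q, variant al P Q -> ~ elt (pcost u Q al) (pcost u P al).

(* C_α(u) = max_σ min_τ cost_α(outcome_u(σ,τ)); σ ranges over the
   coalition's strategies (the α-component of a profile σ is irrelevant),
   τ over α's strategies *)
Definition Cval (al : player G) (u : state G) : enat :=
  esup (fun x => exists sigma : profile,
          x = einf (fun y => exists Q, variant al sigma Q /\ y = pcost u Q al)).

Definition winners (u : state G) (P : profile) : {set player G} :=
  [set al | if excluded_middle_informative (exists n, ostate u P n \in target al)
            then true else false].

Definition safe (W : {set player G}) (x : state G) (a : avec) : Prop :=
  forall al, al \notin W -> forall b : avec,
    (forall p, p <> al -> b p = a p) -> Cval al (delta x b) = None.

Definition memoryless (m : forall p : player G, state G -> act p) : profile :=
  fun p h => m p (hlast h).

Definition punishing (mu : forall al p : player G, state G -> act p) : Prop :=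
  forall al w Q, variant al (memoryless (mu al)) Q -> ele (Cval al w) (pcost w Q al).

Definition second_strike (s0 : state G) (P : profile)
    (mu : forall al p : player G, state G -> act p) : profile :=
  fun p h =>
    let n := size (htrans h) in
    let sts := hstart h :: map snd (htrans h) in
    let j := find (fun i => nth (hstart h) sts i != ostate s0 P i) (iota 0 n.+1) in
    if j == n.+1 then
      (* no state off pi reached: follow pi *)
      oact s0 P n p
    else if j == 0 then P p h  (* history not starting at s0: irrelevant *)
    else
      let a := oact s0 P j.-1 in
      let b := nth a (map fst (htrans h)) j.-1 in
      match [pick al | (b al != a al) &&
                       [forall q, (b q != a q) ==> (q == al)]] with
      | Some al => mu al p (hlast h)  (* al deviated, off pi: punish al *)
      | None => P p h                 (* not a unilateral deviation: irrelevant *)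
      end.

End Games.

Definition Gstar (G : game) : game :=
  @Game (player G) (state G * {set player G})%type (@act G)
     (v0 G, set0)
     (fun (x : state G * {set player G}) (a : avec G) =>
        (delta x.1 a, x.2 :|: [set al | x.1 \in target al]))
     (fun (x : state G * {set player G}) (a : avec G) (al : player G) =>
        if al \in x.2 then 0 else cost x.1 a al)
     (fun al => [set x : state G * {set player G} | al \in x.2]).

(** (1) If a loser α could deviate from a transition of the outcome into a
    state z with C_α(z) < ∞, then, against the other players continuing P
    after that deviation, α has a strategy from z that visits F_α; playing it
    turns α's infinite cost into a finite one, contradicting the equilibrium.

    (2) In the F-expanded game the players of W have cost 0 from the start.
    A player α ∉ W never sees its target along the outcome of P, whose second
    component stays W; if α deviates, the first step that leaves the outcome
    is a unilateral deviation from a safe transition, so it reaches a state z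
    with C_α(z) = ∞, from which the punishing coalition keeps α's cost
    infinite. *)
From Stdlib Require Import ClassicalEpsilon FunctionalExtensionality Classical.
From mathcomp Require Import all_boot.
Set Implicit Arguments. Unset Strict Implicit. Unset Printing Implicit Defensive.

Lemma enat_glb_exists (S : enat -> Prop) : exists x, is_glb S x.
Proof.
have [[n Sn]|noS] := classic (exists n, S (Some n)); last first.
  by exists None; split=> [[k Sk|] //|[]] //; apply: noS; exists k.
pose q n := if excluded_middle_informative (S (Some n)) then true else false.
have qP k : reflect (S (Some k)) (q k).
  by rewrite /q; case: excluded_middle_informative => ?; constructor.
have [m /qP Sm minm] := ex_minnP (ex_intro q n (introT (qP n) Sn)).
exists (Some m); split=> [[k /qP /minm|] //|z]; exact.
Qed.

Lemma enat_lub_exists (S : enat -> Prop) : exists x, is_lub S x.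
Proof.
have [x [lbx glbx]] := enat_glb_exists (fun z => forall y, S y -> ele y z).
by exists x; split=> [y Sy|z /lbx //]; apply: glbx => z; apply.
Qed.

Lemma einf_glb S : is_glb S (einf S).
Proof. exact: epsilon_spec (enat_glb_exists S). Qed.

Lemma esup_lub S : is_lub S (esup S).
Proof. exact: epsilon_spec (enat_lub_exists S). Qed.

Lemma find_iota0_none (p : pred nat) m :
  (forall i, i < m -> ~~ p i) -> find p (iota 0 m) = m.
Proof.
move=> np; rewrite hasNfind ?size_iota //.
by apply/hasPn => i; rewrite mem_iota => /andP[_]; apply: np.
Qed.

Lemma find_iota0_first (p : pred nat) m j :
  j < m -> p j -> (forall i, i < j -> ~~ p i) -> find p (iota 0 m) = j.
Proof.
move=> ltjm pj before_j.
have has_p : has p (iota 0 m) by apply/hasP; exists j; rewrite // mem_iota.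
have ltfm : find p (iota 0 m) < m by rewrite -[m in _ < m](size_iota 0) -has_find.
have := nth_find 0 has_p; rewrite nth_iota // add0n.
case: (ltngtP (find p (iota 0 m)) j) => // [/before_j /negbTE -> //|ltjf _].
by move: (before_find 0 ltjf); rewrite nth_iota ?pj // (ltn_trans ltjf).
Qed.

Lemma first_difference (T : eqType) (f g : nat -> T) :
  f 0 = g 0 -> (exists k, f k != g k) ->
  exists j, (forall i, i <= j -> f i = g i) /\ f j.+1 != g j.+1.
Proof.
move=> fg0 ex_diff; have [[|j] fgj minj] := ex_minnP ex_diff.
  by rewrite fg0 eqxx in fgj.
exists j; split=> // i lei; apply/eqP; apply: contraTT lei => /minj.
by rewrite -ltnNge.
Qed.

Section Outcomes.
Variable G : game.
Implicit Types (P Q : profile G) (u z : state G) (H h : history G).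

Lemma hstart_ohist u P k : hstart (ohist u P k) = u.
Proof. by case: k. Qed.

Lemma size_ohist u P k : size (htrans (ohist u P k)) = k.
Proof. by elim: k => //= k IHk; rewrite size_rcons IHk. Qed.

Lemma ostateS u P k : ostate u P k.+1 = delta (ostate u P k) (oact u P k).
Proof. by rewrite /ostate /hlast /= map_rcons last_rcons. Qed.

Lemma htrans_ohist u P k :
  htrans (ohist u P k) = [seq (oact u P i, ostate u P i.+1) | i <- iota 0 k].
Proof.
elim: k => // k IHk.
by rewrite [LHS]/= IHk -addn1 iotaD map_cat cats1 add0n ostateS.
Qed.

Lemma nth_ohist_state u P k i d : i <= k ->
  nth d (hstart (ohist u P k) :: map snd (htrans (ohist u P k))) i = ostate u P i.
Proof.
rewrite hstart_ohist htrans_ohist; case: i => [|i] //= lt_ik.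
by rewrite -map_comp (nth_map 0) ?size_iota // nth_iota.
Qed.

Lemma nth_ohist_act u P k i d : i < k ->
  nth d (map fst (htrans (ohist u P k))) i = oact u P i.
Proof.
by move=> lt_ik; rewrite htrans_ohist -map_comp (nth_map 0) ?size_iota ?nth_iota.
Qed.

Lemma eq_ohist_prefix u P Q n :
  (forall k p, k < n -> Q p (ohist u P k) = P p (ohist u P k)) ->
  ohist u Q n = ohist u P n.
Proof.
elim: n => //= n IHn eqQP; rewrite IHn => [|k p /ltnW]; last exact: eqQP.
have -> // : (fun p => Q p (ohist u P n)) = (fun p => P p (ohist u P n)).
by apply: functional_extensionality_dep => p; apply: eqQP.
Qed.

Definition hcat H h : history G := Hist (hstart H) (htrans H ++ htrans h).

Lemma hcat_nil H z : hcat H (Hist z [::]) = H.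
Proof. by case: H => s t; rewrite /hcat cats0. Qed.

Lemma hlast_hcat H h : hstart h = hlast H -> hlast (hcat H h) = hlast h.
Proof. by rewrite /hlast /= map_cat last_cat => ->. Qed.

Lemma nth_hcat_state H h i d : i <= size (htrans H) ->
  nth d (hstart (hcat H h) :: map snd (htrans (hcat H h))) i =
  nth d (hstart H :: map snd (htrans H)) i.
Proof.
by move=> le_iH; rewrite /= map_cat -cat_cons nth_cat /= size_map ltnS le_iH.
Qed.

Lemma nth_hcat_act H h i d : i < size (htrans H) ->
  nth d (map fst (htrans (hcat H h))) i = nth d (map fst (htrans H)) i.
Proof. by move=> lt_iH; rewrite /= map_cat nth_cat size_map lt_iH. Qed.

Section Continuation.
Variables (u z : state G) (Q Q' : profile G) (j : nat).
Hypothesis Qj_z : ostate u Q j = z.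
Hypothesis Q_after_j :
  forall h, hstart h = z -> forall p, Q p (hcat (ohist u Q j) h) = Q' p h.

Lemma ohist_continuation k : ohist u Q (j + k) = hcat (ohist u Q j) (ohist z Q' k).
Proof.
elim: k => [|k IHk]; first by rewrite addn0 hcat_nil.
rewrite addnS /= IHk hlast_hcat ?hstart_ohist //.
have -> : (fun p => Q p (hcat (ohist u Q j) (ohist z Q' k))) =
          (fun p => Q' p (ohist z Q' k)).
  by apply: functional_extensionality_dep; apply: Q_after_j; rewrite hstart_ohist.
by rewrite /hcat /= rcons_cat hstart_ohist.
Qed.

Lemma ostate_continuation k : ostate u Q (j + k) = ostate z Q' k.
Proof. by rewrite /ostate ohist_continuation hlast_hcat ?hstart_ohist. Qed.

End Continuation.

Lemma out_cost_finite (s : nat -> state G) a al :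
  out_cost s a al <> None <-> exists k, s k \in target al.
Proof. by rewrite /out_cost; case: excluded_middle_informative. Qed.

Lemma out_cost_start (s : nat -> state G) a al :
  s 0 \in target al -> out_cost s a al = Some 0.
Proof.
rewrite /out_cost => s0_al; case: excluded_middle_informative => [ex|[]]; last by exists 0.
by case: ex_minnP => m _ /(_ 0 s0_al); rewrite leqn0 => /eqP ->; rewrite big_ord0.
Qed.

Lemma in_winners u P al :
  al \in winners u P <-> exists n, ostate u P n \in target al.
Proof. by rewrite inE; case: excluded_middle_informative. Qed.

Lemma Cval_finite_response al z sigma : Cval al z <> None ->
  exists Q, variant al sigma Q /\ pcost z Q al <> None.
Proof.
move=> Cz_fin; apply: NNPP => no_response.
pose T y := exists Q, variant al sigma Q /\ y = pcost z Q al.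
have [_ glbT] := einf_glb T.
have infT : ele None (einf T).
  apply: glbT => _ [Q [sigmaQ ->]].
  by case E: (pcost z Q al) => //; apply: no_response; exists Q; rewrite E.
have [ubC _] := esup_lub (fun x => exists sigma : profile G,
  x = einf (fun y => exists Q, variant al sigma Q /\ y = pcost z Q al)).
move: (ubC (einf T) (ex_intro _ sigma erefl)) Cz_fin infT.
by rewrite /Cval; case: (einf T) => //; case: esup.
Qed.

End Outcomes.

Section Deviation.
Variable G : game.
Implicit Types (P R : profile G) (u z : state G) (h : history G).

Definition deviation P al n (b : avec G) z R : profile G := fun p h =>
  if p == al then
    if size (htrans h) < n then P p h
    else if size (htrans h) == n then b p
    else R p (Hist z (drop n.+1 (htrans h)))
  else P p h.

Lemma deviation_variant P al n b z R : variant al P (deviation P al n b z R).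
Proof. by move=> p /eqP/negbTE ne_p h; rewrite /deviation ne_p. Qed.

Lemma ohist_deviation u P al n b z R :
  (forall q, q <> al -> b q = oact u P n q) ->
  ohist u (deviation P al n b z R) n.+1 =
  Hist u (rcons (htrans (ohist u P n)) (b, delta (ostate u P n) b)).
Proof.
move=> others /=; rewrite (@eq_ohist_prefix _ u P) => [|k p lt_kn]; last first.
  by rewrite /deviation size_ohist lt_kn; case: eqP.
have -> // : (fun p => deviation P al n b z R p (ohist u P n)) = b.
apply: functional_extensionality_dep => p.
by rewrite /deviation size_ohist ltnn eqxx; case: (p =P al) => // /others ->.
Qed.

Lemma deviation_after P al n b z R H h :
  size (htrans H) = n.+1 -> hstart h = z ->
  deviation P al n b z R al (hcat H h) = R al h.
Proof.
move=> size_H start_h; rewrite /deviation eqxx /= size_cat size_H.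
rewrite addSn ltnNge ltnW ?ltnS ?leq_addr //= gtn_eqF ?ltnS ?leq_addr //.
by rewrite drop_size_cat // -start_h; case: h {start_h}.
Qed.

End Deviation.

Lemma NE_safe (G : game) (u : state G) (P : profile G) :
  NE u P -> forall n, safe (winners u P) (ostate u P n) (oact u P n).
Proof.
move=> NE_P n al al_loses b others.
case Cz: (Cval al _) => [c|] //; exfalso.
set z := delta _ b in Cz.
pose H0 := Hist u (rcons (htrans (ohist u P n)) (b, z)).
have Cz_fin : Cval al z <> None by rewrite Cz.
have [R [sigmaR R_wins]] :=
  Cval_finite_response (fun p h => P p (hcat H0 h)) Cz_fin.
pose Q := deviation P al n b z R.
have QH0 : ohist u Q n.+1 = H0 by rewrite ohist_deviation.
have Qz : ostate u Q n.+1 = z by rewrite /ostate QH0 /hlast /= map_rcons last_rcons.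
have Q_after h : hstart h = z -> forall p, Q p (hcat (ohist u Q n.+1) h) = R p h.
  move=> start_h p; rewrite QH0; case: (p =P al) => [->|ne_p].
    by rewrite /Q deviation_after // size_rcons size_ohist.
  by rewrite sigmaR // /Q deviation_variant.
have P_loses : pcost u P al = None.
  apply: NNPP => P_wins; move/negP: al_loses; apply; apply/in_winners.
  by move/out_cost_finite: P_wins.
have Q_wins : pcost u Q al <> None.
  move/out_cost_finite: R_wins => [k R_k].
  by apply/out_cost_finite; exists (n.+1 + k); rewrite (ostate_continuation Qz Q_after).
apply: (NE_P al Q); first exact: deviation_variant.
by rewrite P_loses; case: (pcost u Q al) Q_wins.
Qed.

Section SecondStrike.
Variables (G : game) (s0 : state G) (P : profile G).
Variable mu : forall al p : player G, state G -> act p.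
Implicit Types (Q : profile G) (h : history G).

Lemma pick_deviator (a b : avec G) al :
  b al != a al -> (forall q, q <> al -> b q = a q) ->
  [pick q | (b q != a q) && [forall r, (b r != a r) ==> (r == q)]] = Some al.
Proof.
move=> dev_al others; case: pickP => [q /andP[_ /forallP/(_ al)] | /(_ al)].
  by rewrite dev_al => /eqP->.
rewrite dev_al /= => /negP[]; apply/forallP => r; apply/implyP.
by apply: contraR => /eqP ne_r; rewrite others.
Qed.

Lemma second_strike_on_path Q k p :
  (forall i, i <= k -> ostate s0 Q i = ostate s0 P i) ->
  second_strike s0 P mu p (ohist s0 Q k) = oact s0 P k p.
Proof.
move=> on_path; rewrite /second_strike size_ohist find_iota0_none ?eqxx //.
by move=> i lt_ik; rewrite nth_ohist_state // on_path // negbK.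
Qed.

Lemma second_strike_punish Q al j h p :
  (forall i, i <= j -> ostate s0 Q i = ostate s0 P i) ->
  ostate s0 Q j.+1 != ostate s0 P j.+1 ->
  (forall q, q <> al -> oact s0 Q j q = oact s0 P j q) ->
  second_strike s0 P mu p (hcat (ohist s0 Q j.+1) h) =
  mu al p (hlast (hcat (ohist s0 Q j.+1) h)).
Proof.
move=> on_path off_path others.
have size_H : size (htrans (ohist s0 Q j.+1)) = j.+1 by rewrite size_ohist.
have state_Q i : i <= j.+1 -> nth (hstart (hcat (ohist s0 Q j.+1) h))
    (hstart (hcat (ohist s0 Q j.+1) h) :: map snd (htrans (hcat (ohist s0 Q j.+1) h))) i
    = ostate s0 Q i.
  by move=> le_ij; rewrite nth_hcat_state ?size_H // nth_ohist_state.
rewrite /second_strike size_cat size_H.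
rewrite (@find_iota0_first _ _ j.+1) ?ltnS ?leq_addr ?state_Q //; last first.
  by move=> i lt_ij; rewrite state_Q ?on_path ?negbK // ltnW.
rewrite ltn_eqF ?ltnS ?leq_addr // nth_hcat_act ?size_H // nth_ohist_act //=.
rewrite (@pick_deviator _ _ al) //.
apply: contra off_path => /eqP dev; rewrite !ostateS on_path //; apply/eqP.
congr delta; apply: functional_extensionality_dep => q.
by case: (q =P al) => [->|/others].
Qed.

End SecondStrike.

Section SecondStrikeNE.
Variables (G : game) (u : state G) (W : {set player G}) (P : profile (Gstar G)).
Variable mu : forall al p : player (Gstar G), state (Gstar G) -> act p.
Implicit Types (Q : profile (Gstar G)) (al : player (Gstar G)).
Let s0 : state (Gstar G) := (u, W).
Let Pbar := second_strike s0 P mu.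
Hypothesis P_in_W : forall n, (ostate s0 P n).2 = W.
Hypothesis P_safe : forall n, safe (G := Gstar G) W (ostate s0 P n) (oact s0 P n).
Hypothesis mu_punishing : punishing mu.

Lemma in_target_Gstar al (x : state (Gstar G)) : (x \in target al) = (al \in x.2).
Proof. by rewrite inE. Qed.

Lemma pcost_old_winner Q al : al \in W -> pcost s0 Q al = Some 0.
Proof. by move=> al_W; apply: out_cost_start; rewrite in_target_Gstar. Qed.

Lemma deviator_never_wins Q al :
  al \notin W -> variant al Pbar Q -> forall k, ostate s0 Q k \notin target al.
Proof.
move=> al_W PbarQ.
have [dev|on_path] := classic (exists k, ostate s0 Q k != ostate s0 P k); last first.
  move=> k; suff /eqP -> : ostate s0 Q k == ostate s0 P k.
    by rewrite in_target_Gstar P_in_W.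
  by apply/negPn/negP => dev_k; apply: on_path; exists k.
have [j [eq_j off_path]] := first_difference (erefl : ostate s0 Q 0 = ostate s0 P 0) dev.
have others q : q <> al -> oact s0 Q j q = oact s0 P j q.
  by move=> ne_q; rewrite /oact PbarQ // /Pbar second_strike_on_path.
set z := ostate s0 Q j.+1.
have z_lost : Cval al z = None.
  by rewrite /z ostateS eq_j //; exact: (@P_safe j al al_W _ others).
pose Q' : profile (Gstar G) := fun p h =>
  if p == al then Q p (hcat (ohist s0 Q j.+1) h) else mu al p (hlast h).
have Q'_lost : pcost z Q' al = None.
  have Q'_var : variant al (memoryless (mu al)) Q'.
    by move=> p /eqP/negbTE ne_p h; rewrite /Q' ne_p.
  by move: (@mu_punishing al z Q' Q'_var); rewrite z_lost; case: pcost.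
have Q_after h : hstart h = z -> forall p, Q p (hcat (ohist s0 Q j.+1) h) = Q' p h.
  move=> start_h p; rewrite /Q'; case: (p =P al) => [-> //|ne_p].
  rewrite PbarQ // /Pbar (second_strike_punish _ _ _ eq_j off_path others).
  by rewrite hlast_hcat // hstart_ohist.
move=> k; case: (leqP k j) => [le_kj|lt_jk].
  by rewrite eq_j // in_target_Gstar P_in_W.
rewrite -(subnKC lt_jk) (ostate_continuation (erefl z) Q_after).
apply/negP => Q'_k; suff : pcost z Q' al <> None by rewrite Q'_lost.
by apply/out_cost_finite; exists (k - j.+1).
Qed.

Lemma second_strike_NE : NE s0 Pbar.
Proof.
move=> al Q PbarQ; case: (boolP (al \in W)) => [al_W|al_W].
  by rewrite (pcost_old_winner Pbar) // /elt; case: (pcost s0 Q al) => [[|m]|] [].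
suff -> : pcost s0 Q al = None by case=> /=; case: (pcost s0 Pbar al).
apply: NNPP => /out_cost_finite[k].
exact/negP/(deviator_never_wins al_W PbarQ).
Qed.

End SecondStrikeNE.

Theorem lemma2 (G : game) :
  (* (1) *)
  (forall P : profile G, NE (v0 G) P ->
     forall n, safe (winners (v0 G) P) (ostate (v0 G) P n) (oact (v0 G) P n))
  /\
  (* (2) *)
  (forall (u : state G) (W : {set player G}) (P : profile (Gstar G)),
     let s0 : state (Gstar G) := (u, W) in
     (forall n, (ostate s0 P n).2 = W) ->
     (forall n, safe (G := Gstar G) W (ostate s0 P n) (oact s0 P n)) ->
     forall mu : forall al p : player (Gstar G), state (Gstar G) -> act p,
       punishing mu ->
       NE s0 (second_strike s0 P mu)).
Proof.
split; first exact: NE_safe.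
by move=> u W P s0 P_in_W P_safe mu mu_punishing; apply: second_strike_NE.
Qed.
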